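(* Let $Y\subset\mathbb{R}^n$ be open, and let $\omega\colon Y\to\mathbb{R}^n$, $f\colon Y\to\mathbb{R}^n$, $F\colon Y\to\mathbb{R}$, $H\colon Y\to\mathbb{R}^{n\times m}$, $g\colon Y\to\mathbb{R}^m$, $f^{\mathrm{num}}\colon Y\times Y\to\mathbb{R}^n$, $H^{\mathrm{num}}\colon Y\times Y\to\mathbb{R}^{n\times m}$, $(Hg)^{\mathrm{num}}\colon Y\times Y\to\mathbb{R}^n$ be arbitrary with $f^{\mathrm{num}}(u,u)=f(u)$, $H^{\mathrm{num}}(u,u)=H(u)$, $(Hg)^{\mathrm{num}}(u,u)=H(u)g(u)$. Then the following are equivalent: (A) there exists $F^{\mathrm{num}}\colon Y\times Y\to\mathbb{R}$ with $F^{\mathrm{num}}(u,u)=F(u)$ such that for all $u_-,u_0,u_+\in Y$, $$\omega(u_0)\cdot\Big(f^{\mathrm{num}}(u_0,u_+)-f^{\mathrm{num}}(u_-,u_0)+(Hg)^{\mathrm{num}}(u_0,u_+)-(Hg)^{\mathrm{num}}(u_-,u_0)-H^{\mathrm{num}}(u_0,u_+)g(u_0)+H^{\mathrm{num}}(u_-,u_0)g(u_0)\Big)\ \ge\ F^{\mathrm{num}}(u_0,u_+)-F^{\mathrm{num}}(u_-,u_0);$$ (B) for all $u_-,u_+\in Y$, $$[\![\omega]\!]\cdot f^{\mathrm{num}}+[\![\omega]\!]\cdot (Hg)^{\mathrm{num}}-\omega(u_+)\cdot H^{\mathrm{num}}g(u_+)+\omega(u_-)\cdot H^{\mathrm{num}}g(u_-)\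 \le\ [\![\omega\cdot f-F]\!],$$ with all numerical fluxes evaluated at $(u_-,u_+)$. Moreover, there exists a consistent $F^{\mathrm{num}}$ with equality in (A) for all triples iff (B) holds with equality for all pairs, and then $$F^{\mathrm{num}}=\{\{F\}\}+\{\{\omega\}\}\cdot f^{\mathrm{num}}-\{\{\omega\cdot f\}\}+\{\{\omega\}\}\cdot(Hg)^{\mathrm{num}}-\tfrac12\omega(u_+)\cdot H^{\mathrm{num}}g(u_+)-\tfrac12\omega(u_-)\cdot H^{\mathrm{num}}g(u_-).$$
   Context: For a function $a$ on $Y$ and states $u_\pm$: $\{\{a\}\}=\tfrac12(a(u_-)+a(u_+))$, $[\![a]\!]=a(u_+)-a(u_-)$. *)

From HB Require Import structures.
From mathcomp Require Import all_boot all_order all_algebra.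
From mathcomp Require Import all_classical all_reals all_analysis.
Set Implicit Arguments. Unset Strict Implicit. Unset Printing Implicit Defensive.
Import Order.TTheory GRing.Theory Num.Theory.
Import numFieldNormedType.Exports.
Local Open Scope ring_scope.

Definition dotv (R : realType) (n : nat) (a b : 'cV[R]_n) : R :=
  \sum_(i < n) a i 0 * b i 0.

From HB Require Import structures.
From mathcomp Require Import all_boot all_order all_algebra.
From mathcomp Require Import all_classical all_reals all_analysis.
From mathcomp Require Import lra.
Set Implicit Arguments. Unset Strict Implicit. Unset Printing Implicit Defensive.
Import Order.TTheory GRing.Theory Num.Theory.
Import numFieldNormedType.Exports.
Local Open Scope classical_set_scope.
Local Open Scope ring_scope.

(* Split the interface term at (u_-, u_+) into the part [P u_- u_+] tested
   against omega(u_-) and the part [Q u_- u_+] tested against omega(u_+); both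
   equal D u := omega(u).f(u) on the diagonal, and the cell inequality reads
   [Fnum u0 u+ - Fnum u- u0 <= P u0 u+ - Q u- u0].  The cell gaps on the
   degenerate triples (u-, u+, u+) and (u-, u-, u+) add up to the jump gap,
   which gives necessity; conversely [Fnum a b := P a b - D a + F a] has cell
   gap equal to the jump gap, which gives sufficiency.  When all gaps vanish,
   the two degenerate triples give two expressions for [Fnum]; their average
   is the symmetric formula. *)

Section Dot.
Variables (R : realType) (n : nat).
Implicit Types a b c : 'cV[R]_n.

Lemma dotvDl a b c : dotv (a + b) c = dotv a c + dotv b c.
Proof. by rewrite /dotv -big_split; apply: eq_bigr => i _; rewrite mxE mulrDl. Qed.

Lemma dotvDr a b c : dotv a (b + c) = dotv a b + dotv a c.
Proof. by rewrite /dotv -big_split; apply: eq_bigr => i _; rewrite mxE mulrDr. Qed.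

Lemma dotvNl a c : dotv (- a) c = - dotv a c.
Proof. by rewrite /dotv -sumrN; apply: eq_bigr => i _; rewrite mxE mulNr. Qed.

Lemma dotvNr a c : dotv a (- c) = - dotv a c.
Proof. by rewrite /dotv -sumrN; apply: eq_bigr => i _; rewrite mxE mulrN. Qed.

Lemma dotvZl (k : R) a c : dotv (k *: a) c = k * dotv a c.
Proof. by rewrite /dotv mulr_sumr; apply: eq_bigr => i _; rewrite mxE mulrA. Qed.

End Dot.

Section EntropyFlux.
Variables (R : realFieldType) (T : Type) (Y : set T).
Variables (P Q : T -> T -> R) (D G : T -> R).
Hypothesis P_diag : forall u, Y u -> P u u = D u.
Hypothesis Q_diag : forall u, Y u -> Q u u = D u.

Definition consistent_flux (Fnum : T -> T -> R) := forall u, Y u -> Fnum u u = G u.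

Definition cell_gap (Fnum : T -> T -> R) a b c := P b c - Q a b - (Fnum b c - Fnum a b).

Definition jump_gap a b := (D b - G b) - (D a - G a) - (Q a b - P a b).

Definition canonical_flux a b := P a b - D a + G a.

Lemma cell_gap_degenerate_sum Fnum a b : consistent_flux Fnum -> Y a -> Y b ->
  cell_gap Fnum a b b + cell_gap Fnum a a b = jump_gap a b.
Proof.
move=> FG Ya Yb; rewrite /cell_gap /jump_gap.
by rewrite FG // FG // P_diag // Q_diag //; lra.
Qed.

Lemma cell_gap_canonical a b c : cell_gap canonical_flux a b c = jump_gap a b.
Proof. by rewrite /cell_gap /jump_gap /canonical_flux; lra. Qed.

Lemma consistent_canonical_flux : consistent_flux canonical_flux.
Proof. by move=> u Yu; rewrite /canonical_flux P_diag //; lra. Qed.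

Lemma cell_ineq_iff_jump_ineq :
  (exists Fnum, consistent_flux Fnum /\
     forall a b c, Y a -> Y b -> Y c -> Fnum b c - Fnum a b <= P b c - Q a b)
  <-> (forall a b, Y a -> Y b -> Q a b - P a b <= (D b - G b) - (D a - G a)).
Proof.
split=> [[Fnum [FG cell]] a b Ya Yb | jump].
- have := cell_gap_degenerate_sum FG Ya Yb; rewrite /cell_gap /jump_gap.
  by have := cell a b b Ya Yb Yb; have := cell a a b Ya Ya Yb; lra.
- exists canonical_flux; split=> [|a b c Ya Yb _]; first exact: consistent_canonical_flux.
  by have := cell_gap_canonical a b c; have := jump a b Ya Yb; rewrite /cell_gap /jump_gap; lra.
Qed.

Lemma cell_eq_iff_jump_eq :
  (exists Fnum, consistent_flux Fnum /\
     forall a b c, Y a -> Y b -> Y c -> P b c - Q a b = Fnum b c - Fnum a b)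
  <-> (forall a b, Y a -> Y b -> Q a b - P a b = (D b - G b) - (D a - G a)).
Proof.
split=> [[Fnum [FG cell]] a b Ya Yb | jump].
- have := cell_gap_degenerate_sum FG Ya Yb; rewrite /cell_gap /jump_gap.
  by have := cell a b b Ya Yb Yb; have := cell a a b Ya Ya Yb; lra.
- exists canonical_flux; split=> [|a b c Ya Yb _]; first exact: consistent_canonical_flux.
  by have := cell_gap_canonical a b c; have := jump a b Ya Yb; rewrite /cell_gap /jump_gap; lra.
Qed.

Lemma cell_eq_flux_average Fnum : consistent_flux Fnum ->
  (forall a b c, Y a -> Y b -> Y c -> P b c - Q a b = Fnum b c - Fnum a b) ->
  forall a b, Y a -> Y b ->
  Fnum a b = (G a + G b) / 2 + (P a b + Q a b) / 2 - (D a + D b) / 2.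
Proof.
move=> FG cell a b Ya Yb.
have := cell a b b Ya Yb Yb; have := cell a a b Ya Ya Yb.
by rewrite FG // FG // P_diag // Q_diag //; lra.
Qed.

End EntropyFlux.

Theorem mainTheorem7 (R : realType) (n m : nat) (Y : set 'cV[R]_n)
  (omega f : 'cV[R]_n -> 'cV[R]_n) (F : 'cV[R]_n -> R)
  (H : 'cV[R]_n -> 'M[R]_(n, m)) (g : 'cV[R]_n -> 'cV[R]_m)
  (fnum : 'cV[R]_n -> 'cV[R]_n -> 'cV[R]_n)
  (Hnum : 'cV[R]_n -> 'cV[R]_n -> 'M[R]_(n, m))
  (Hgnum : 'cV[R]_n -> 'cV[R]_n -> 'cV[R]_n) :
  open Y ->
  (forall u, Y u -> fnum u u = f u) ->
  (forall u, Y u -> Hnum u u = H u) ->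
  (forall u, Y u -> Hgnum u u = H u *m g u) ->
  let lhsA (um u0 up : 'cV[R]_n) : R :=
    dotv (omega u0)
      (fnum u0 up - fnum um u0 + Hgnum u0 up - Hgnum um u0
       - Hnum u0 up *m g u0 + Hnum um u0 *m g u0) in
  let lhsB (um up : 'cV[R]_n) : R :=
    dotv (omega up - omega um) (fnum um up)
    + dotv (omega up - omega um) (Hgnum um up)
    - dotv (omega up) (Hnum um up *m g up)
    + dotv (omega um) (Hnum um up *m g um) in
  let rhsB (um up : 'cV[R]_n) : R :=
    (dotv (omega up) (f up) - F up) - (dotv (omega um) (f um) - F um) in
  ((exists Fnum : 'cV[R]_n -> 'cV[R]_n -> R,
      (forall u, Y u -> Fnum u u = F u) /\
      (forall um u0 up, Y um -> Y u0 -> Y up ->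
         lhsA um u0 up >= Fnum u0 up - Fnum um u0))
   <->
   (forall um up, Y um -> Y up -> lhsB um up <= rhsB um up))
  /\
  ((exists Fnum : 'cV[R]_n -> 'cV[R]_n -> R,
      (forall u, Y u -> Fnum u u = F u) /\
      (forall um u0 up, Y um -> Y u0 -> Y up ->
         lhsA um u0 up = Fnum u0 up - Fnum um u0))
   <->
   (forall um up, Y um -> Y up -> lhsB um up = rhsB um up))
  /\
  (forall Fnum : 'cV[R]_n -> 'cV[R]_n -> R,
      (forall u, Y u -> Fnum u u = F u) ->
      (forall um u0 up, Y um -> Y u0 -> Y up ->
         lhsA um u0 up = Fnum u0 up - Fnum um u0) ->
      forall um up, Y um -> Y up ->
        Fnum um up =
          (F um + F up) / 2
          + dotv (2^-1 *: (omega um + omega up)) (fnum um up)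
          - (dotv (omega um) (f um) + dotv (omega up) (f up)) / 2
          + dotv (2^-1 *: (omega um + omega up)) (Hgnum um up)
          - dotv (omega up) (Hnum um up *m g up) / 2
          - dotv (omega um) (Hnum um up *m g um) / 2).
Proof.
move=> _ f_diag H_diag Hg_diag lhsA lhsB rhsB.
pose flux a b u := fnum a b + Hgnum a b - Hnum a b *m g u.
pose P a b := dotv (omega a) (flux a b a).
pose Q a b := dotv (omega b) (flux a b b).
pose D u := dotv (omega u) (f u).
have flux_diag u : Y u -> flux u u u = f u.
  by move=> Yu; rewrite /flux f_diag // Hg_diag // H_diag // addrK.
have P_diag u : Y u -> P u u = D u by move=> Yu; rewrite /P flux_diag.
have Q_diag u : Y u -> Q u u = D u by move=> Yu; rewrite /Q flux_diag.
have -> : lhsA = fun um u0 up => P u0 up - Q um u0.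
  by apply/funext => um; apply/funext => u0; apply/funext => up;
    rewrite /lhsA /P /Q /flux !(dotvDr, dotvNr); lra.
have -> : lhsB = fun um up => Q um up - P um up.
  by apply/funext => um; apply/funext => up;
    rewrite /lhsB /P /Q /flux !(dotvDl, dotvNl, dotvDr, dotvNr); lra.
split; [exact: cell_ineq_iff_jump_ineq P_diag Q_diag|split].
  exact: cell_eq_iff_jump_eq P_diag Q_diag.
move=> Fnum Fnum_diag cell um up Yum Yup.
rewrite (cell_eq_flux_average P_diag Q_diag Fnum_diag cell Yum Yup).
by rewrite /P /Q /D /flux !(dotvZl, dotvDl, dotvDr, dotvNr); lra.
Qed.
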